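(* Let $\mathfrak{P}=(\rho_{t_0},\mathcal{E}_{t_1\leftarrow t_0},\dots,\mathcal{E}_{t_n\leftarrow t_{n-1}})$ be a multi-time quantum process over $n+1$ time steps, with fixed projective measurements $\{\Pi^{t_k}_{b_k}\}_{b_k}$ (and, for the doubled distribution, a second family $\{\Pi^{t_k}_{a_k}\}_{a_k}$) at each time $t_k$. Let $0=i_0<i_1<\dots<i_k\le n$ and let $\mathfrak{P}'=(\rho_{t_0},\mathcal{E}'_{t_{i_1}\leftarrow t_{i_0}},\dots,\mathcal{E}'_{t_{i_k}\leftarrow t_{i_{k-1}}})$ be the sub-process with the same initial state and with $$\mathcal{E}'_{t_{i_j}\leftarrow t_{i_{j-1}}}=\mathcal{E}_{t_{i_j}\leftarrow t_{i_j-1}}\circ\mathcal{E}_{t_{i_j-1}\leftarrow t_{i_j-2}}\circ\cdots\circ\mathcal{E}_{t_{i_{j-1}+1}\leftarrow t_{i_{j-1}}},$$ measured at times $t_{i_0},t_{i_1},\dots,t_{i_k}$ with the same projectors as in $\mathfrak{P}$. Then the temporal KD quasiprobability distribution (right, left, or doubled) of $\mathfrak{P}'$ equals the marginal of the corresponding temporal KD quasiprobability distribution of $\mathfrak{P}$ obtained by summing over all outcome variables at the time steps not in $\{t_{i_0},\dots,t_{i_k}\}$ (for the doubled distribution, summing over both the ket-side and bra-side outcomes at those times). Moreover, if two such sub-processes have retained time sets $S$ and $T$ with $S\cap T\neq\emptyset$, then the marginals of their temporal KD distributions onto the outcome variables at the times in $S\cap T$ coincide.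
   Context: All Hilbert spaces are finite-dimensional. A multi-time quantum process $\mathfrak{P}=(\rho_{t_0},\mathcal{E}_{t_1\leftarrow t_0},\dots,\mathcal{E}_{t_n\leftarrow t_{n-1}})$ consists of a density operator $\rho_{t_0}$ on $\mathcal{H}_{t_0}$ and completely positive trace-preserving (CPTP) maps $\mathcal{E}_{t_j\leftarrow t_{j-1}}:\mathbf{B}(\mathcal{H}_{t_{j-1}})\to\mathbf{B}(\mathcal{H}_{t_j})$, extended linearly to all (not necessarily Hermitian) operators. At each time $t_k$ a complete family of orthogonal projectors is fixed ($\sum_{b}\Pi^{t_k}_b=\mathbb{I}$, $\Pi^{t_k}_b\Pi^{t_k}_{b'}=\delta_{bb'}\Pi^{t_k}_b$). The right temporal Kirkwood–Dirac (KD) quasiprobability distribution is $$\overrightarrow{Q}_{\rm KD}(b_n,\dots,b_0)=\operatorname{Tr}\Big[\mathcal{E}_{t_n\leftarrow t_{n-1}}\Big(\cdots\mathcal{E}_{t_2\leftarrow t_1}\big(\mathcal{E}_{t_1\leftarrow t_0}(\rho_{t_0}\Pi^{t_0}_{b_0})\Pi^{t_1}_{b_1}\big)\Pi^{t_2}_{b_2}\cdots\Big)\Pi^{t_n}_{b_n}\Big],$$ the left one is $$\overleftarrow{Q}_{\rm KD}(a_n,\dots,a_0)=\operatorname{Tr}\Big[\Pi^{t_n}_{a_n}\mathcal{E}_{t_n\leftarrow t_{n-1}}\Big(\cdots\Pi^{t_1}_{a_1}\mathcal{E}_{t_1\leftarrow t_0}(\Pi^{t_0}_{a_0}\rho_{t_0})\cdots\Big)\Big],$$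 and the doubled one (ket-side projectors $\Pi^{t_k}_{a_k}$, bra-side projectors $\Pi^{t_k}_{b_k}$) is $$\overleftrightarrow{Q}_{\rm KD}(a_n,\dots,a_0;b_n,\dots,b_0)=\operatorname{Tr}\Big[\Pi^{t_n}_{a_n}\mathcal{E}_{t_n\leftarrow t_{n-1}}\Big(\cdots\Pi^{t_1}_{a_1}\mathcal{E}_{t_1\leftarrow t_0}\big(\Pi^{t_0}_{a_0}\rho_{t_0}\Pi^{t_0}_{b_0}\big)\Pi^{t_1}_{b_1}\cdots\Big)\Pi^{t_n}_{b_n}\Big].$$ *)

From HB Require Import structures.
From mathcomp Require Import all_boot all_order all_algebra.
From mathcomp Require Import mxtens.
Set Implicit Arguments. Unset Strict Implicit. Unset Printing Implicit Defensive.
Import Order.TTheory GRing.Theory Num.Theory.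
Local Open Scope ring_scope.

Section QuantumDefs.
Variable C : numClosedFieldType.

Definition adjmx m n (A : 'M[C]_(m, n)) : 'M[C]_(n, m) := (map_mx Num.conj A)^T.

Definition psd n (A : 'M[C]_n) : Prop :=
  forall v : 'cV[C]_n, 0 <= (adjmx v *m A *m v) 0 0.

Definition density n (rho : 'M[C]_n) : Prop := psd rho /\ \tr rho = 1.

Definition linear_map n p (E : 'M[C]_n -> 'M[C]_p) : Prop :=
  forall (a : C) (X Y : 'M[C]_n), E (a *: X + Y) = a *: E X + E Y.

(* (id_m (x) E) acting on 'M_(m * n) = operators on C^m (x) C^n *)
Definition ampl m n p (E : 'M[C]_n -> 'M[C]_p) (X : 'M[C]_(m * n)) : 'M[C]_(m * p) :=
  \matrix_(r, s)
    E (\matrix_(j, j') X (mxtens_index ((mxtens_unindex r).1, j))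
                         (mxtens_index ((mxtens_unindex s).1, j')))
      (mxtens_unindex r).2 (mxtens_unindex s).2.

Definition completely_positive n p (E : 'M[C]_n -> 'M[C]_p) : Prop :=
  forall (m : nat) (X : 'M[C]_(m * n)), psd X -> psd (@ampl m n p E X).

Definition trace_preserving n p (E : 'M[C]_n -> 'M[C]_p) : Prop :=
  forall X : 'M[C]_n, \tr (E X) = \tr X.

Definition CPTP n p (E : 'M[C]_n -> 'M[C]_p) : Prop :=
  [/\ linear_map E, completely_positive E & trace_preserving E].

Definition proj_family n (O : finType) (P : O -> 'M[C]_n) : Prop :=
  [/\ forall b, adjmx (P b) = P b,
      forall b b', P b *m P b' = if b == b' then P b else 0
    & \sum_(b : O) P b = 1%:M].

(* A multi-time process over times t_0..t_n: dimensions d k of H_{t_k},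
   initial state rho on H_{t_0}, maps E k : B(H_{t_k}) -> B(H_{t_(k+1)}). *)
Variable d : nat -> nat.

Definition process_ok (n : nat) (rho : 'M[C]_(d 0))
    (E : forall k, 'M[C]_(d k) -> 'M[C]_(d k.+1)) : Prop :=
  density rho /\ forall k, (k < n)%N -> CPTP (E k).

Section KD.
Variable n : nat.
Variable rho : 'M[C]_(d 0).
Variable E : forall k, 'M[C]_(d k) -> 'M[C]_(d k.+1).

Fixpoint kdR_op (O : nat -> finType) (P : forall k, O k -> 'M[C]_(d k))
    (b : forall k : 'I_n.+1, O k) (k : nat) : (k < n.+1)%N -> 'M[C]_(d k) :=
  match k return (k < n.+1)%N -> 'M[C]_(d k) with
  | 0 => fun h => rho *m P 0 (b (Ordinal h))
  | k'.+1 => fun h => @E k' (@kdR_op O P b k' (ltnW h)) *m P k'.+1 (b (Ordinal h))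
  end.

Definition kdR (O : nat -> finType) (P : forall k, O k -> 'M[C]_(d k))
    (b : {dffun forall k : 'I_n.+1, O k}) : C :=
  \tr (kdR_op P b (ltnSn n)).

Fixpoint kdL_op (O : nat -> finType) (P : forall k, O k -> 'M[C]_(d k))
    (a : forall k : 'I_n.+1, O k) (k : nat) : (k < n.+1)%N -> 'M[C]_(d k) :=
  match k return (k < n.+1)%N -> 'M[C]_(d k) with
  | 0 => fun h => P 0 (a (Ordinal h)) *m rho
  | k'.+1 => fun h => P k'.+1 (a (Ordinal h)) *m @E k' (@kdL_op O P a k' (ltnW h))
  end.

Definition kdL (O : nat -> finType) (P : forall k, O k -> 'M[C]_(d k))
    (a : {dffun forall k : 'I_n.+1, O k}) : C :=
  \tr (kdL_op P a (ltnSn n)).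

(* doubled KD: ket-side projectors PA (outcomes a), bra-side PB (outcomes b) *)
Fixpoint kdD_op (OA OB : nat -> finType)
    (PA : forall k, OA k -> 'M[C]_(d k)) (PB : forall k, OB k -> 'M[C]_(d k))
    (a : forall k : 'I_n.+1, OA k) (b : forall k : 'I_n.+1, OB k)
    (k : nat) : (k < n.+1)%N -> 'M[C]_(d k) :=
  match k return (k < n.+1)%N -> 'M[C]_(d k) with
  | 0 => fun h => PA 0 (a (Ordinal h)) *m rho *m PB 0 (b (Ordinal h))
  | k'.+1 => fun h => PA k'.+1 (a (Ordinal h)) *m @E k' (@kdD_op OA OB PA PB a b k' (ltnW h))
                        *m PB k'.+1 (b (Ordinal h))
  end.

Definition kdD (OA OB : nat -> finType)
    (PA : forall k, OA k -> 'M[C]_(d k)) (PB : forall k, OB k -> 'M[C]_(d k))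
    (a : {dffun forall k : 'I_n.+1, OA k}) (b : {dffun forall k : 'I_n.+1, OB k}) : C :=
  \tr (kdD_op PA PB a b (ltnSn n)).
End KD.

(* Composite channel E_{b-1} o ... o E_a : B(H_{t_a}) -> B(H_{t_b}) (identity if a = b;
   only used for a <= b). *)
Section Comp.
Variable E : forall k, 'M[C]_(d k) -> 'M[C]_(d k.+1).

Definition dcast (a b : nat) (X : 'M[C]_(d a)) : 'M[C]_(d b) :=
  match a =P b with
  | ReflectT h => castmx (f_equal d h, f_equal d h) X
  | ReflectF _ => 0
  end.

Fixpoint ecomp (a b : nat) : 'M[C]_(d a) -> 'M[C]_(d b) :=
  if a == b then @dcast a b
  else match b return 'M[C]_(d a) -> 'M[C]_(d b) with
       | 0 => fun _ => 0
       | b'.+1 => fun X => @E b' (@ecomp a b' X)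
       end.
End Comp.

(* Retained times t_{i_0}, ..., t_{i_k}, given by ts = [:: i_1; ...; i_k] (i_0 = 0 is implicit). *)
Definition rtime (n : nat) (ts : seq 'I_n.+1) (j : nat) : 'I_n.+1 :=
  nth ord0 (ord0 :: ts) j.

Definition incr_times (n : nat) (ts : seq 'I_n.+1) : bool :=
  path ltn 0%N (map val ts).

Definition sub_d (n : nat) (ts : seq 'I_n.+1) : nat -> nat := fun j => d (rtime ts j).

Definition retained (n : nat) (ts : seq 'I_n.+1) (k : 'I_n.+1) : bool :=
  k \in ord0 :: ts.

End QuantumDefs.

Definition sub_E (C : numClosedFieldType) (d : nat -> nat)
    (E : forall k, 'M[C]_(d k) -> 'M[C]_(d k.+1)) (n : nat) (ts : seq 'I_n.+1) :
    forall j, 'M[C]_(sub_d d ts j) -> 'M[C]_(sub_d d ts j.+1) :=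
  fun j => @ecomp C d E (rtime ts j) (rtime ts j.+1).

Definition sub_O (n : nat) (ts : seq 'I_n.+1) (O : nat -> finType) : nat -> finType :=
  fun j => O (rtime ts j).

Definition sub_P (C : numClosedFieldType) (d : nat -> nat) (n : nat) (ts : seq 'I_n.+1)
    (O : nat -> finType) (P : forall k, O k -> 'M[C]_(d k)) :
    forall j, sub_O ts O j -> 'M[C]_(sub_d d ts j) :=
  fun j => P (rtime ts j).

Arguments sub_E {C d} E {n} ts j _.
Arguments sub_P {C d n} ts {O} P j _.
Arguments sub_O {n} ts O j.

Definition restricts (n : nat) (ts : seq 'I_n.+1) (O : nat -> finType)
    (b : {dffun forall k : 'I_n.+1, O k})
    (c : {dffun forall j : 'I_(size ts).+1, sub_O ts O j}) : bool :=
  [forall j : 'I_(size ts).+1, b (rtime ts j) == c j].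

Definition agrees_on (n : nat) (ts ts2 : seq 'I_n.+1) (O : nat -> finType)
    (e : {dffun forall k : 'I_n.+1, O k})
    (c : {dffun forall j : 'I_(size ts).+1, sub_O ts O j}) : bool :=
  [forall j : 'I_(size ts).+1, (rtime ts j \in ord0 :: ts2) ==> (c j == e (rtime ts j))].

From mathcomp Require Import all_boot all_order all_algebra.
Import GRing.Theory Num.Theory.
Local Open Scope ring_scope.

Set Implicit Arguments.
Unset Strict Implicit.
Unset Printing Implicit Defensive.

(* The KD operator at the last time is built from rho by alternately applying a
   channel and an additive measurement map: X |-> X Pi_b, X |-> Pi_a X, or
   X |-> Pi_a X Pi_b (the doubled distribution is treated as a single
   distribution over outcome pairs).  Summing over the outcomes at one time
   replaces that measurement map by its coarse-graining, which is the identity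
   because the projectors sum to 1.  Once every discarded time is summed over,
   consecutive channels compose into the channels of the sub-process, and the
   channels after its last time disappear under the trace because they are
   trace preserving.  For the second claim, both marginals equal the sum of the
   full distribution over the outcome strings that agree with the given ones on
   S ∩ T. *)

Lemma morph_add0 (U V : zmodType) (f : U -> V) : {morph f : x y / x + y} -> f 0 = 0.
Proof. by move=> fD; apply: (@addrI _ (f 0)); rewrite -fD !addr0. Qed.

Lemma morph_sum (U V : zmodType) (f : U -> V) : {morph f : x y / x + y} ->
  forall (I : Type) (r : seq I) (P : pred I) (F : I -> U),
  f (\sum_(i <- r | P i) F i) = \sum_(i <- r | P i) f (F i).
Proof. by move=> fD I r P F; apply: (big_morph f fD (morph_add0 fD)). Qed.

Section OutcomePairs.
Variables (n : nat) (OA OB : nat -> finType).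

Definition prod_outcomes : nat -> finType := fun k => (OA k * OB k)%type.

Local Notation stringA := {dffun forall k : 'I_n.+1, OA k}.
Local Notation stringB := {dffun forall k : 'I_n.+1, OB k}.
Local Notation stringAB := {dffun forall k : 'I_n.+1, prod_outcomes k}.

Definition dfpair (a : stringA) (b : stringB) : stringAB := finfun (fun k => (a k, b k)).
Definition dffst (ab : stringAB) : stringA := finfun (fun k => (ab k).1).
Definition dfsnd (ab : stringAB) : stringB := finfun (fun k => (ab k).2).

Lemma dfpairK ab : dfpair (dffst ab) (dfsnd ab) = ab.
Proof. by apply/ffunP => k; rewrite !ffunE -surjective_pairing. Qed.

Lemma sum_dfpair (V : nmodType) (pa : pred stringA) (pb : pred stringB)
    (F : stringA -> stringB -> V) :
  \sum_(a | pa a) \sum_(b | pb b) F a b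
  = \sum_(ab | pa (dffst ab) && pb (dfsnd ab)) F (dffst ab) (dfsnd ab).
Proof.
rewrite pair_big_dep (reindex (fun ab => (dffst ab, dfsnd ab))) //.
exists (fun p => dfpair p.1 p.2) => [ab _|[a b] _]; first exact: dfpairK.
by congr (_, _); apply/ffunP => k; rewrite !ffunE.
Qed.

End OutcomePairs.

Lemma restricts_dfpair n (ts : seq 'I_n.+1) (OA OB : nat -> finType)
    (ab : {dffun forall k : 'I_n.+1, prod_outcomes OA OB k})
    (ca : {dffun forall j : 'I_(size ts).+1, sub_O ts OA j})
    (cb : {dffun forall j : 'I_(size ts).+1, sub_O ts OB j}) :
  restricts ab (dfpair ca cb) = restricts (dffst ab) ca && restricts (dfsnd ab) cb.
Proof.
apply/forallP/andP => [eq_ab | [/forallP eq_a /forallP eq_b] j].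
  by split; apply/forallP => j; have := eq_ab j; rewrite !ffunE => /eqP ->.
by have := eq_a j; have := eq_b j; rewrite !ffunE [ab _]surjective_pairing xpair_eqE => -> ->.
Qed.

Section KDChain.
Variables (C : numClosedFieldType) (d : nat -> nat).
Variables (E : forall k, 'M[C]_(d k) -> 'M[C]_(d k.+1)) (rho : 'M[C]_(d 0)).
Implicit Type J : forall k, 'M[C]_(d k) -> 'M[C]_(d k).

Fixpoint kd_chain J (m : nat) : 'M[C]_(d m) :=
  if m is m'.+1 then J m'.+1 (@E m' (kd_chain J m')) else J 0 rho.

Definition instr_seq n (O : nat -> finType) (K : forall k, O k -> 'M[C]_(d k) -> 'M[C]_(d k))
    (b : forall k : 'I_n.+1, O k) (m : nat) : 'M[C]_(d m) -> 'M[C]_(d m) :=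
  if (m < n.+1)%N =P true is ReflectT h then K m (b (Ordinal h)) else id.

Lemma instr_seqE n O K b m (h : (m < n.+1)%N) : @instr_seq n O K b m = K m (b (Ordinal h)).
Proof. by rewrite /instr_seq; case: eqP => [h'|/(_ h)//]; rewrite (bool_irrelevance h' h). Qed.

Lemma kdR_opE n O P b m (h : (m < n.+1)%N) :
  kdR_op rho E P b h = kd_chain (@instr_seq n O (fun k x X => X *m P k x) b) m.
Proof. by elim: m h => [|m IH] h /=; rewrite (instr_seqE _ _ h) ?IH. Qed.

Lemma kdL_opE n O P b m (h : (m < n.+1)%N) :
  kdL_op rho E P b h = kd_chain (@instr_seq n O (fun k x X => P k x *m X) b) m.
Proof. by elim: m h => [|m IH] h /=; rewrite (instr_seqE _ _ h) ?IH. Qed.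

Definition pair_instr (OA OB : nat -> finType) (PA : forall k, OA k -> 'M[C]_(d k))
    (PB : forall k, OB k -> 'M[C]_(d k)) k (ab : prod_outcomes OA OB k) (X : 'M[C]_(d k)) :=
  PA k ab.1 *m X *m PB k ab.2.

Lemma kdD_opE n (OA OB : nat -> finType) PA PB (a : {dffun forall k : 'I_n.+1, OA k})
    (b : {dffun forall k : 'I_n.+1, OB k}) m (h : (m < n.+1)%N) :
  kdD_op rho E PA PB a b h = kd_chain (instr_seq (pair_instr PA PB) (dfpair a b)) m.
Proof. by elim: m h => [|m IH] h /=; rewrite (instr_seqE _ _ h) ?IH /pair_instr ffunE. Qed.

Lemma ecomp_id a (X : 'M[C]_(d a)) : ecomp E a X = X.
Proof.
by case: a X => [|a] X; rewrite /= ?eqxx /dcast; case: eqP => // h; rewrite castmx_id.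
Qed.

Lemma ecompS a m (X : 'M[C]_(d a)) : (a <= m)%N -> ecomp E m.+1 X = @E m (ecomp E m X).
Proof. by move=> am /=; rewrite ltn_eqF. Qed.

Lemma tr_ecomp a m (X : 'M[C]_(d a)) : (a <= m)%N ->
  (forall k Y, (a <= k < m)%N -> \tr (@E k Y) = \tr Y) -> \tr (ecomp E m X) = \tr X.
Proof.
elim: m => [|m IH]; first by case: a X => // X _ _; rewrite ecomp_id.
rewrite leq_eqVlt ltnS => /predU1P[<- _|am E_tr]; first by rewrite ecomp_id.
rewrite ecompS // E_tr; last by rewrite am ltnSn.
by apply: IH => // k Y /andP[ak km]; rewrite E_tr // ak ltnW.
Qed.

Lemma kd_chain_idle J a m : (a <= m)%N -> (forall k, (a < k <= m)%N -> J k =1 id) ->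
  kd_chain J m = ecomp E m (kd_chain J a).
Proof.
elim: m => [|m IH]; first by case: a => // _ _; rewrite ecomp_id.
rewrite leq_eqVlt ltnS => /predU1P[<- _|am idle]; first by rewrite ecomp_id.
have IHm : kd_chain J m = ecomp E m (kd_chain J a).
  by apply: IH => // k /andP[ak km]; apply: idle; rewrite ak ltnW.
by rewrite ecompS // -IHm /= idle // ltnS am leqnn.
Qed.

Lemma kd_chain_idle_next J a b : (a < b)%N -> (forall k, (a < k < b)%N -> J k =1 id) ->
  kd_chain J b = J b (ecomp E b (kd_chain J a)).
Proof.
case: b => // m; rewrite ltnS => am idle.
by rewrite ecompS // -(kd_chain_idle am).
Qed.

End KDChain.

Section RetainedTimes.
Variables (n : nat) (ts : seq 'I_n.+1).
Hypothesis ts_incr : incr_times ts.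

Definition discarded (k : nat) : bool := [forall j : 'I_(size ts).+1, rtime ts j != k :> nat].

Lemma rtime_ltn i j : (i <= size ts)%N -> (j <= size ts)%N ->
  (rtime ts i < rtime ts j)%N = (i < j)%N.
Proof.
have nthE l : (l <= size ts)%N -> rtime ts l = nth 0%N (map val (ord0 :: ts)) l :> nat.
  by move=> hl; rewrite (nth_map ord0).
have idx l : (l <= size ts)%N -> l \in [pred i | i < size (map val (@ord0 n :: ts))]%N.
  by move=> hl; rewrite inE size_map ltnS.
have sorted_times : sorted <%O (map val (@ord0 n :: ts)) := ts_incr.
move=> hi hj; rewrite !nthE //.
exact (Order.POrderTheory.lt_sorted_ltn_nth 0%N sorted_times (idx _ hi) (idx _ hj)).
Qed.

Lemma rtime_inj i j : (i <= size ts)%N -> (j <= size ts)%N ->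
  rtime ts i = rtime ts j :> nat -> i = j.
Proof.
move=> hi hj eq_ij.
by case: (ltngtP i j) (rtime_ltn hi hj) (rtime_ltn hj hi) => // _; rewrite eq_ij ltnn.
Qed.

Lemma discarded_between j k : (j < size ts)%N ->
  (rtime ts j < k < rtime ts j.+1)%N -> discarded k.
Proof.
move=> hj /andP[jk kj]; apply/forallP => i; have hi : (i <= size ts)%N := ltn_ord i.
apply/eqP => ik; move: jk kj.
rewrite -ik !rtime_ltn // ?(ltnW hj) // => ji.
by rewrite ltnS leqNgt ji.
Qed.

Lemma discarded_after k : (rtime ts (size ts) < k)%N -> discarded k.
Proof.
move=> lk; apply/forallP => i; have hi : (i <= size ts)%N := ltn_ord i.
by apply/eqP => ik; move: lk; rewrite -ik rtime_ltn // ltnNge hi.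
Qed.

End RetainedTimes.

Section Reduction.
Variables (C : numClosedFieldType) (d : nat -> nat).
Variables (E : forall k, 'M[C]_(d k) -> 'M[C]_(d k.+1)) (rho : 'M[C]_(d 0)).
Variables (n : nat) (ts : seq 'I_n.+1).
Hypothesis ts_incr : incr_times ts.
Hypothesis E_tr : forall k X, (k < n)%N -> \tr (@E k X) = \tr X.
Variables (J : forall k, 'M[C]_(d k) -> 'M[C]_(d k))
          (J' : forall j, 'M[C]_(sub_d d ts j) -> 'M[C]_(sub_d d ts j)).
Hypothesis J'_retained : forall j, (j <= size ts)%N -> @J' j =1 @J (rtime ts j).
Hypothesis J_discarded : forall k, (k <= n)%N -> discarded ts k -> @J k =1 id.

Lemma kd_chain_sub j : (j <= size ts)%N ->
  kd_chain (sub_E E ts) rho J' j = kd_chain E rho J (rtime ts j).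
Proof.
elim: j => [|j IH] hj; first exact: J'_retained.
have hj' := ltnW hj.
rewrite /= J'_retained // IH // /sub_E.
rewrite (@kd_chain_idle_next _ _ E rho J (rtime ts j) (rtime ts j.+1)) ?rtime_ltn //.
move=> k jkj; apply: J_discarded; last exact: (discarded_between ts_incr hj jkj).
by case/andP: jkj => _ /ltnW/leq_trans; apply; apply: leq_ord.
Qed.

Lemma tr_kd_chain_sub : \tr (kd_chain (sub_E E ts) rho J' (size ts)) = \tr (kd_chain E rho J n).
Proof.
have last_le := leq_ord (rtime ts (size ts)).
rewrite kd_chain_sub // (kd_chain_idle _ _ last_le) ?(tr_ecomp _ last_le) //.
- by move=> k Y /andP[_ kn]; exact: E_tr.
- move=> k /andP[lk kn]; apply: J_discarded => //; exact: discarded_after.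
Qed.

End Reduction.

Section CoarseGraining.
Variables (C : numClosedFieldType) (d : nat -> nat).
Variables (E : forall k, 'M[C]_(d k) -> 'M[C]_(d k.+1)) (rho : 'M[C]_(d 0)) (n : nat).
Hypothesis E_add : forall k, (k < n)%N -> {morph @E k : X Y / X + Y}.
Variables (O : nat -> finType) (K : forall k, O k -> 'M[C]_(d k) -> 'M[C]_(d k)).
Hypothesis K_add : forall k x, {morph @K k x : X Y / X + Y}.
Variable ok : forall k, pred (O k).

Definition coarse k (X : 'M[C]_(d k)) : 'M[C]_(d k) := \sum_(x | @ok k x) K x X.

Local Notation outcomes := {dffun forall k : 'I_n.+1, O k}.

Definition ok_before (m : nat) (b b' : outcomes) : bool :=
  [forall k : 'I_n.+1, if (k < m)%N then @ok k (b' k) else b' k == b k].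

Definition dfupd (b : outcomes) (i : 'I_n.+1) (x : O i) : outcomes :=
  finfun (dfwith (fun k => b k) x).

Lemma ok_before0 b b' : ok_before 0 b b' = (b' == b).
Proof. by apply/forallP/eqP => [b'b|-> //]; apply/ffunP => k; apply/eqP/b'b. Qed.

Lemma ok_before_from m b b' (i : 'I_n.+1) : (m <= i)%N -> ok_before m b b' -> b' i = b i.
Proof. by move=> mi /forallP/(_ i); rewrite ltnNge mi => /eqP. Qed.

Lemma sum_ok_beforeS (V : nmodType) (i : 'I_n.+1) b (F : outcomes -> V) :
  \sum_(b' | ok_before i.+1 b b') F b'
  = \sum_(x | @ok i x) \sum_(b' | ok_before i (@dfupd b i x) b') F b'.
Proof.
rewrite (partition_big (fun b' : outcomes => b' i) (@ok i)) => [|b' /forallP/(_ i)]; last first.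
  by rewrite ltnSn.
apply: eq_bigr => x okx; apply: eq_bigl => b'.
have ltS k : i != k -> (k < i.+1)%N = (k < i)%N.
  by move=> ik; rewrite ltnS leq_eqVlt; case: eqP => // /val_inj ki; rewrite ki eqxx in ik.
apply/andP/forallP => [[/forallP b'_ok /eqP b'i] k | b'_ok].
  have [<-|ik] := eqVneq i k; first by rewrite ltnn ffunE dfwith_in b'i.
  by have := b'_ok k; rewrite ffunE dfwith_out // ltS.
have b'i : b' i = x by have := b'_ok i; rewrite ltnn ffunE dfwith_in => /eqP.
split; last by rewrite b'i.
apply/forallP => k; have [<-|ik] := eqVneq i k; first by rewrite ltnSn b'i.
by have := b'_ok k; rewrite ffunE dfwith_out // ltS.
Qed.

Lemma sum_kd_chain_ok_before m (hm : (m < n.+1)%N) (b : outcomes) :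
  \sum_(b' | ok_before m.+1 b b') kd_chain E rho (instr_seq K b') m = kd_chain E rho coarse m.
Proof.
elim: m hm b => [|m IH] hm b; rewrite (sum_ok_beforeS (Ordinal hm)) /= /coarse;
  apply: eq_bigr => x okx.
  rewrite (big_pred1 (@dfupd b (Ordinal hm) x)) => [|b']; last by rewrite /= ok_before0.
  by rewrite (instr_seqE _ _ hm) ffunE dfwith_in.
transitivity (\sum_(b' | ok_before m.+1 (@dfupd b (Ordinal hm) x) b')
                K x (E (kd_chain E rho (instr_seq K b') m))).
  apply: eq_bigr => b' hb'.
  have b'x := ok_before_from (leqnn m.+1 : (m.+1 <= Ordinal hm)%N) hb'.
  by rewrite (instr_seqE _ _ hm) b'x ffunE dfwith_in.
by rewrite -(morph_sum (K_add x)) -(morph_sum (E_add _)) // IH // ltnW.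
Qed.

Lemma kd_chain_coarse_eq0 (k : 'I_n.+1) :
  (forall x, ~~ @ok k x) -> kd_chain E rho coarse n = 0.
Proof.
move=> none_ok.
have coarse_k0 : @coarse k =1 (fun _ => 0).
  by move=> X; apply: big_pred0 => x; exact: negbTE (none_ok x).
have chain_k : kd_chain E rho coarse k = 0.
  by case: (nat_of_ord k) coarse_k0 => [|k'] coarse0; rewrite /= coarse0.
suff chain_m m : (k <= m <= n)%N -> kd_chain E rho coarse m = 0.
  by apply: chain_m; rewrite leq_ord leqnn.
elim: m => [|m IH] /andP[]; rewrite leq_eqVlt => /predU1P[<- //|km mn] //.
have chain_m : kd_chain E rho coarse m = 0 by apply: IH; rewrite -ltnS km (ltnW mn).
rewrite /= chain_m (morph_add0 (E_add mn)) /coarse.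
by apply: big1 => x _; exact: morph_add0 (K_add x).
Qed.

Lemma sum_kd_chain_ok :
  \sum_(b : outcomes | [forall k : 'I_n.+1, @ok k (b k)]) kd_chain E rho (instr_seq K b) n
  = kd_chain E rho coarse n.
Proof.
(* The induction needs a reference outcome string; if no string is [ok], both sides vanish. *)
have [/forallP some_ok | ] := boolP [forall k : 'I_n.+1, [exists x, @ok k x]].
  pose b0 : outcomes := finfun (fun k => xchoose (existsP (some_ok k))).
  rewrite -(sum_kd_chain_ok_before (ltnSn n) b0); apply: eq_bigl => b.
  by apply: eq_forallb => k; rewrite ltn_ord.
rewrite negb_forall => /existsP[k]; rewrite negb_exists => /forallP none_ok.
rewrite (kd_chain_coarse_eq0 none_ok) big_pred0 // => b.
by apply/negbTE; rewrite negb_forall; apply/existsP; exists k; exact: none_ok.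
Qed.

End CoarseGraining.

Section SubProcessMarginal.
Variables (C : numClosedFieldType) (d : nat -> nat).
Variables (E : forall k, 'M[C]_(d k) -> 'M[C]_(d k.+1)) (rho : 'M[C]_(d 0)) (n : nat).
Hypothesis E_add : forall k, (k < n)%N -> {morph @E k : X Y / X + Y}.
Hypothesis E_tr : forall k X, (k < n)%N -> \tr (@E k X) = \tr X.
Variables (ts : seq 'I_n.+1) (O : nat -> finType).
Hypothesis ts_incr : incr_times ts.
Variable c : {dffun forall j : 'I_(size ts).+1, sub_O ts O j}.

(* [x : O k] and [c j : O (rtime ts j)] have different types; they are compared as
   [Tagged] values. *)
Definition consistent k : pred (O k) := fun x =>
  [forall j : 'I_(size ts).+1, (rtime ts j == k :> nat) ==> (Tagged O x == Tagged O (c j))].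

Lemma consistent_retained j (hj : (j < (size ts).+1)%N) x :
  @consistent (rtime ts j) x = (x == c (Ordinal hj)).
Proof.
apply/forallP/eqP => [x_ok | -> i].
  by have := x_ok (Ordinal hj); rewrite eqxx eq_Tagged => /eqP.
apply/implyP => /eqP ij; suff -> : i = Ordinal hj by [].
by apply/val_inj/(rtime_inj ts_incr (ltn_ord i) hj).
Qed.

Lemma consistent_discarded k x : discarded ts k -> @consistent k x.
Proof. by move=> /forallP disc; apply/forallP => j; rewrite (negbTE (disc j)). Qed.

Lemma restrictsE b : restricts b c = [forall k : 'I_n.+1, @consistent k (b k)].
Proof.
apply/forallP/forallP => [b_c k | b_ok j].
  by apply/forallP => j; apply/implyP => /eqP/val_inj jk; subst k; rewrite eq_Tagged b_c.
by have /forallP/(_ j) := b_ok (rtime ts j); rewrite eqxx eq_Tagged.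
Qed.

Variable K : forall k, O k -> 'M[C]_(d k) -> 'M[C]_(d k).
Hypothesis K_add : forall k x, {morph @K k x : X Y / X + Y}.
Hypothesis K_complete : forall (k : 'I_n.+1) X, \sum_x @K k x X = X.

Lemma tr_kd_chain_sub_marginal :
  \tr (kd_chain (sub_E E ts) rho (instr_seq (fun j x => @K (rtime ts j) x) c) (size ts))
  = \sum_(b | restricts b c) \tr (kd_chain E rho (instr_seq K b) n).
Proof.
rewrite (tr_kd_chain_sub rho ts_incr E_tr (J := coarse K (@consistent))) //.
- rewrite -(sum_kd_chain_ok rho E_add K_add) raddf_sum.
  by apply: eq_bigl => b; rewrite restrictsE.
- move=> j hj X; rewrite (instr_seqE _ _ hj) /coarse.
  by rewrite (eq_bigl _ _ (consistent_retained hj)) big_pred1_eq.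
- move=> k kn disc X; rewrite /= -[RHS](@K_complete (@Ordinal n.+1 k kn) X) /coarse.
  by apply: eq_bigl => x; exact: consistent_discarded.
Qed.

End SubProcessMarginal.

Section ProjectiveMeasurements.
Variables (C : numClosedFieldType) (m : nat).

Lemma sum_mulmx_proj p (O : finType) (P : O -> 'M[C]_m) (X : 'M[C]_(p, m)) :
  proj_family P -> \sum_x X *m P x = X.
Proof. by case=> _ _ sumP; rewrite -mulmx_sumr sumP mulmx1. Qed.

Lemma sum_proj_mulmx p (O : finType) (P : O -> 'M[C]_m) (X : 'M[C]_(m, p)) :
  proj_family P -> \sum_x P x *m X = X.
Proof. by case=> _ _ sumP; rewrite -mulmx_suml sumP mul1mx. Qed.

Lemma sum_proj_mulmx_proj (OA OB : finType) (PA : OA -> 'M[C]_m) (PB : OB -> 'M[C]_m)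
    (X : 'M[C]_m) :
  proj_family PA -> proj_family PB -> \sum_(ab : OA * OB) PA ab.1 *m X *m PB ab.2 = X.
Proof.
move=> HPA HPB; rewrite -(pair_bigA _ (fun a b => PA a *m X *m PB b)) /=.
by under eq_bigr do rewrite sum_mulmx_proj //; rewrite sum_proj_mulmx.
Qed.

End ProjectiveMeasurements.

Section KDMarginals.
Variables (C : numClosedFieldType) (n : nat) (d : nat -> nat).
Variables (rho : 'M[C]_(d 0)) (E : forall k, 'M[C]_(d k) -> 'M[C]_(d k.+1)).
Hypothesis proc : process_ok n rho E.
Variable ts : seq 'I_n.+1.
Hypothesis ts_incr : incr_times ts.

Lemma process_ok_add k : (k < n)%N -> {morph @E k : X Y / X + Y}.
Proof.
case: proc => _ /(_ k) cptp /cptp[lin _ _] X Y.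
by have := lin 1 X Y; rewrite !scale1r.
Qed.

Lemma process_ok_tr k X : (k < n)%N -> \tr (@E k X) = \tr X.
Proof. by case: proc => _ /(_ k) cptp /cptp[]. Qed.

Lemma kdR_sub_marginal (O : nat -> finType) (P : forall k, O k -> 'M[C]_(d k)) :
    (forall k : 'I_n.+1, proj_family (P k)) ->
  forall c, kdR rho (sub_E E ts) (sub_P ts P) c = \sum_(b | restricts b c) kdR rho E P b.
Proof.
move=> HP c; rewrite /kdR kdR_opE.
rewrite (tr_kd_chain_sub_marginal rho process_ok_add process_ok_tr ts_incr c
          (K := fun k x X => X *m P k x)).
- by apply: eq_bigr => b _; rewrite kdR_opE.
- by move=> k x X Y; rewrite mulmxDl.
- by move=> k X; rewrite sum_mulmx_proj.
Qed.

Lemma kdL_sub_marginal (O : nat -> finType) (P : forall k, O k -> 'M[C]_(d k)) :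
    (forall k : 'I_n.+1, proj_family (P k)) ->
  forall c, kdL rho (sub_E E ts) (sub_P ts P) c = \sum_(b | restricts b c) kdL rho E P b.
Proof.
move=> HP c; rewrite /kdL kdL_opE.
rewrite (tr_kd_chain_sub_marginal rho process_ok_add process_ok_tr ts_incr c
          (K := fun k x X => P k x *m X)).
- by apply: eq_bigr => b _; rewrite kdL_opE.
- by move=> k x X Y; rewrite mulmxDr.
- by move=> k X; rewrite sum_proj_mulmx.
Qed.

Lemma kdD_sub_marginal (OA OB : nat -> finType)
    (PA : forall k, OA k -> 'M[C]_(d k)) (PB : forall k, OB k -> 'M[C]_(d k)) :
    (forall k : 'I_n.+1, proj_family (PA k)) -> (forall k : 'I_n.+1, proj_family (PB k)) ->
  forall ca cb, kdD rho (sub_E E ts) (sub_P ts PA) (sub_P ts PB) ca cb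
    = \sum_(a | restricts a ca) \sum_(b | restricts b cb) kdD rho E PA PB a b.
Proof.
move=> HPA HPB ca cb; rewrite sum_dfpair /kdD kdD_opE.
rewrite (tr_kd_chain_sub_marginal rho process_ok_add process_ok_tr ts_incr (dfpair ca cb)
          (K := pair_instr PA PB)).
- by apply: eq_big => [ab | ab _]; rewrite ?restricts_dfpair // kdD_opE dfpairK.
- by move=> k x X Y; rewrite /pair_instr mulmxDr mulmxDl.
- by move=> k X; rewrite sum_proj_mulmx_proj.
Qed.

End KDMarginals.

Section CommonMarginals.
Variables (n : nat) (O : nat -> finType) (e : {dffun forall k : 'I_n.+1, O k}).

Definition agree_common (ts1 ts2 : seq 'I_n.+1) (b : {dffun forall k : 'I_n.+1, O k}) : bool :=
  [forall k : 'I_n.+1, retained ts1 k && retained ts2 k ==> (b k == e k)].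

Lemma agree_commonC ts1 ts2 : agree_common ts1 ts2 =1 agree_common ts2 ts1.
Proof. by move=> b; apply: eq_forallb => k; rewrite andbC. Qed.

Definition restrict (ts : seq 'I_n.+1) (b : {dffun forall k : 'I_n.+1, O k}) :
  {dffun forall j : 'I_(size ts).+1, sub_O ts O j} :=
  finfun (fun j : 'I_(size ts).+1 => b (rtime ts j)).

Lemma restrictsP ts b c : restricts b c = (c == restrict ts b).
Proof.
apply/forallP/eqP => [b_c | -> j]; last by rewrite ffunE.
by apply/ffunP => j; rewrite ffunE; apply/esym/eqP/b_c.
Qed.

Lemma agrees_on_restrict ts1 ts2 b : agrees_on ts2 e (restrict ts1 b) = agree_common ts1 ts2 b.
Proof.
apply/forallP/forallP => [b_e k | b_e j].
  apply/implyP => /andP[k1 k2].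
  have j_lt : (index k (ord0 :: ts1) < (size ts1).+1)%N.
    by rewrite -[(size ts1).+1]/(size (ord0 :: ts1)) index_mem.
  have jk : rtime ts1 (Ordinal j_lt) = k by rewrite /rtime nth_index.
  have := b_e (Ordinal j_lt); move: (Ordinal j_lt) jk => {j_lt} j jk.
  by subst k; rewrite ffunE => /implyP; apply.
apply/implyP => j2; rewrite ffunE.
by have /implyP := b_e (rtime ts1 j); apply; rewrite /retained j2 andbT /rtime mem_nth.
Qed.

Lemma sum_agrees_restricts (V : nmodType) ts1 ts2 (F : {dffun forall k : 'I_n.+1, O k} -> V) :
  \sum_(c : {dffun forall j : 'I_(size ts1).+1, sub_O ts1 O j} | agrees_on ts2 e c)
     \sum_(b | restricts b c) F b
  = \sum_(b | agree_common ts1 ts2 b) F b.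
Proof.
rewrite (exchange_big_dep predT) //= [RHS]big_mkcond; apply: eq_bigr => b _.
rewrite -agrees_on_restrict; case: ifP => agrees.
  rewrite (big_pred1 (restrict ts1 b)) // => c.
  by rewrite /= restrictsP; case: eqP => [->|_]; rewrite ?agrees ?andbF.
rewrite big_pred0 // => c.
by rewrite restrictsP; case: eqP => [->|_]; rewrite ?agrees ?andbF.
Qed.

Lemma marginals_agree (V : nmodType) ts1 ts2 (F : {dffun forall k : 'I_n.+1, O k} -> V)
    (G1 : {dffun forall j : 'I_(size ts1).+1, sub_O ts1 O j} -> V)
    (G2 : {dffun forall j : 'I_(size ts2).+1, sub_O ts2 O j} -> V) :
    (forall c, G1 c = \sum_(b | restricts b c) F b) ->
    (forall c, G2 c = \sum_(b | restricts b c) F b) ->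
  \sum_(c | agrees_on ts2 e c) G1 c = \sum_(c | agrees_on ts1 e c) G2 c.
Proof.
move=> G1E G2E; under eq_bigr do rewrite G1E; under [RHS]eq_bigr do rewrite G2E.
by rewrite !sum_agrees_restricts; apply: eq_bigl; apply: agree_commonC.
Qed.

End CommonMarginals.

Lemma marginals_agree2 (V : nmodType) n (OA OB : nat -> finType) (ts1 ts2 : seq 'I_n.+1)
    (ea : {dffun forall k : 'I_n.+1, OA k}) (eb : {dffun forall k : 'I_n.+1, OB k})
    (F : {dffun forall k : 'I_n.+1, OA k} -> {dffun forall k : 'I_n.+1, OB k} -> V)
    (G1 : {dffun forall j : 'I_(size ts1).+1, sub_O ts1 OA j} ->
          {dffun forall j : 'I_(size ts1).+1, sub_O ts1 OB j} -> V)
    (G2 : {dffun forall j : 'I_(size ts2).+1, sub_O ts2 OA j} ->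
          {dffun forall j : 'I_(size ts2).+1, sub_O ts2 OB j} -> V) :
    (forall ca cb, G1 ca cb = \sum_(a | restricts a ca) \sum_(b | restricts b cb) F a b) ->
    (forall ca cb, G2 ca cb = \sum_(a | restricts a ca) \sum_(b | restricts b cb) F a b) ->
  \sum_(ca | agrees_on ts2 ea ca) \sum_(cb | agrees_on ts2 eb cb) G1 ca cb
  = \sum_(ca | agrees_on ts1 ea ca) \sum_(cb | agrees_on ts1 eb cb) G2 ca cb.
Proof.
have sum_common ts ts' G : (forall ca cb, G ca cb
      = \sum_(a | restricts a ca) \sum_(b | restricts b cb) F a b) ->
    \sum_(ca : {dffun forall j : 'I_(size ts).+1, sub_O ts OA j} | agrees_on ts' ea ca)
      \sum_(cb : {dffun forall j : 'I_(size ts).+1, sub_O ts OB j} | agrees_on ts' eb cb) G ca cb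
    = \sum_(a | agree_common ea ts ts' a) \sum_(b | agree_common eb ts ts' b) F a b.
  move=> GE; rewrite -sum_agrees_restricts; apply: eq_bigr => ca _.
  under eq_bigr do rewrite GE.
  by rewrite exchange_big; apply: eq_bigr => a _; rewrite sum_agrees_restricts.
move=> G1E G2E; rewrite (sum_common _ _ _ G1E) (sum_common _ _ _ G2E).
by apply: eq_big => [|a _]; [apply: agree_commonC | apply: eq_bigl; apply: agree_commonC].
Qed.

Theorem lemma1 (C : numClosedFieldType) (n : nat) (d : nat -> nat)
    (rho : 'M[C]_(d 0)) (E : forall k, 'M[C]_(d k) -> 'M[C]_(d k.+1))
    (O OA OB : nat -> finType)
    (P : forall k, O k -> 'M[C]_(d k))
    (PA : forall k, OA k -> 'M[C]_(d k))
    (PB : forall k, OB k -> 'M[C]_(d k)) :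
  process_ok n rho E ->
  (forall k : 'I_n.+1, proj_family (P k)) ->
  (forall k : 'I_n.+1, proj_family (PA k)) ->
  (forall k : 'I_n.+1, proj_family (PB k)) ->
  (* (1) sub-process KD = marginal of the full KD over the discarded times *)
  (forall ts : seq 'I_n.+1, incr_times ts ->
     (forall c : {dffun forall j : 'I_(size ts).+1, sub_O ts O j},
        kdR rho (sub_E E ts) (sub_P ts P) c
        = \sum_(b | restricts b c) kdR rho E P b)
     /\ (forall c : {dffun forall j : 'I_(size ts).+1, sub_O ts OA j},
        kdL rho (sub_E E ts) (sub_P ts PA) c
        = \sum_(a | restricts a c) kdL rho E PA a)
     /\ (forall (ca : {dffun forall j : 'I_(size ts).+1, sub_O ts OA j})
                (cb : {dffun forall j : 'I_(size ts).+1, sub_O ts OB j}),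
        kdD rho (sub_E E ts) (sub_P ts PA) (sub_P ts PB) ca cb
        = \sum_(a | restricts a ca) \sum_(b | restricts b cb) kdD rho E PA PB a b))
  /\
  (* (2) two sub-processes with overlapping retained time sets S, T have the same
         marginals on the times in S \cap T *)
  (forall ts1 ts2 : seq 'I_n.+1, incr_times ts1 -> incr_times ts2 ->
     has (fun k => k \in ord0 :: ts2) (ord0 :: ts1) ->
     (forall e : {dffun forall k : 'I_n.+1, O k},
        \sum_(c | agrees_on ts2 e c) kdR rho (sub_E E ts1) (sub_P ts1 P) c
        = \sum_(c | agrees_on ts1 e c) kdR rho (sub_E E ts2) (sub_P ts2 P) c)
     /\ (forall e : {dffun forall k : 'I_n.+1, OA k},
        \sum_(c | agrees_on ts2 e c) kdL rho (sub_E E ts1) (sub_P ts1 PA) c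
        = \sum_(c | agrees_on ts1 e c) kdL rho (sub_E E ts2) (sub_P ts2 PA) c)
     /\ (forall (ea : {dffun forall k : 'I_n.+1, OA k})
                (eb : {dffun forall k : 'I_n.+1, OB k}),
        \sum_(ca | agrees_on ts2 ea ca) \sum_(cb | agrees_on ts2 eb cb)
           kdD rho (sub_E E ts1) (sub_P ts1 PA) (sub_P ts1 PB) ca cb
        = \sum_(ca | agrees_on ts1 ea ca) \sum_(cb | agrees_on ts1 eb cb)
           kdD rho (sub_E E ts2) (sub_P ts2 PA) (sub_P ts2 PB) ca cb)).
Proof.
(* The overlap hypothesis is automatic: every sub-process retains t_0. *)
move=> proc HP HPA HPB; split=> [ts ts_incr | ts1 ts2 incr1 incr2 _].
  split; [|split].
  - exact: kdR_sub_marginal.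
  - exact: kdL_sub_marginal.
  - exact: kdD_sub_marginal.
split; [|split] => *.
- by apply: marginals_agree => c; apply: kdR_sub_marginal.
- by apply: marginals_agree => c; apply: kdL_sub_marginal.
- by apply: marginals_agree2 => ca cb; apply: kdD_sub_marginal.
Qed.
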